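(* Let $k\in\mathbb{Z}$. For all positive integers $x,n$, $$(-1)^{x-1}E_{n-1}^{(k)}(x)+E_{n-1}^{(k)}=\frac{2}{n}\sum_{m=1}^{n}\sum_{j=1}^{m}\sum_{i=0}^{x-1}(-1)^{i}i^{n-m}\binom{n}{m}\frac{S_{1}(m,j)}{j^{k-1}}.$$
   Context: Convention: $0^0=1$. For $k\in\mathbb{Z}$, $\mathrm{Ei}_k(x)=\sum_{n=1}^{\infty}\frac{x^n}{n^k(n-1)!}$. The poly-Genocchi polynomials $G_n^{(k)}(x)$ are defined by $\frac{2\,\mathrm{Ei}_k(\log(1+t))}{e^t+1}e^{xt}=\sum_{n=0}^{\infty}G_n^{(k)}(x)\frac{t^n}{n!}$; the poly-Euler polynomials are $E_n^{(k)}(x)=\frac{G_{n+1}^{(k)}(x)}{n+1}$ ($n\ge0$), and $E_n^{(k)}=E_n^{(k)}(0)$. $S_1(n,m)$ are the signed Stirling numbers of the first kind: $\frac{(\log(1+t))^m}{m!}=\sum_{n=m}^{\infty}S_1(n,m)\frac{t^n}{n!}$. *)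

From mathcomp Require Import all_boot all_order all_algebra.
Set Implicit Arguments. Unset Strict Implicit. Unset Printing Implicit Defensive.
Import Order.TTheory GRing.Theory Num.Theory.
Local Open Scope ring_scope.

(* a formal power series sum_n f n * t^n *)
Definition fps := nat -> rat.

Definition fone : fps := fun n => if n == 0%N then 1 else 0.
Definition fadd (f g : fps) : fps := fun n => f n + g n.
Definition fscale (c : rat) (f : fps) : fps := fun n => c * f n.
Definition fmul (f g : fps) : fps :=
  fun n => \sum_(i < n.+1) f i * g (n - i)%N.
Fixpoint fpow (f : fps) (m : nat) : fps :=
  match m with 0%N => fone | m'.+1 => fmul f (fpow f m') end.
(* composition f(g(t)); meaningful when g 0 = 0 *)
Definition fcomp (f g : fps) : fps :=
  fun n => \sum_(m < n.+1) f m * fpow g m n.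
(* multiplicative inverse of a series with nonzero constant term:
   b_0 = 1/a_0, b_n = -(1/a_0) * sum_{i=1}^n a_i b_{n-i} *)
Fixpoint finv_aux (f : fps) (n : nat) : seq rat :=
  match n with
  | 0%N => [:: (f 0%N)^-1]
  | n'.+1 => let s := finv_aux f n' in
      rcons s (- (f 0%N)^-1 * \sum_(i < n) f i.+1 * nth 0 s (n' - i)%N)
  end.
Definition finv (f : fps) : fps := fun n => nth 0 (finv_aux f n) n.

Definition fexp (x : rat) : fps := fun n => x ^+ n / (n`!)%:R.
Definition fexp_plus1 : fps := fadd (fexp 1) fone.
Definition flog1p : fps :=
  fun n => if n == 0%N then 0 else (-1) ^+ n.-1 / n%:R.
Definition fEi (k : int) : fps :=
  fun n => if n == 0%N then 0 else ((n%:R : rat) ^ k)^-1 / (n.-1`!)%:R.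

(* poly-Genocchi polynomials:
   2 Ei_k(log(1+t)) / (e^t+1) * e^{xt} = sum_n G_n^{(k)}(x) t^n/n! *)
Definition polyGenocchi (k : int) (x : rat) (n : nat) : rat :=
  (n`!)%:R * fmul (fscale 2 (fmul (fcomp (fEi k) flog1p) (finv fexp_plus1)))
                  (fexp x) n.

Definition polyEuler (k : int) (x : rat) (n : nat) : rat :=
  polyGenocchi k x n.+1 / (n.+1)%:R.

(* signed Stirling numbers of the first kind:
   (log(1+t))^m/m! = sum_n S1(n,m) t^n/n! *)
Definition stirling1 (n m : nat) : rat :=
  (n`!)%:R * fpow flog1p m n / (m`!)%:R.

From Pilot Require Import Defs.
From mathcomp Require Import all_boot all_order all_algebra.
From mathcomp Require Import ring.
Import Order.TTheory GRing.Theory Num.Theory.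
Set Implicit Arguments. Unset Strict Implicit. Unset Printing Implicit Defensive.
Local Open Scope ring_scope.

(* The geometric identity (e^t + 1) * \sum_(i < x) (- e^t)^i = 1 + (-1)^(x-1) e^(xt),
   multiplied by 2 Ei_k(log(1+t)) / (e^t + 1), shows that
   (-1)^(x-1) G_n^(k)(x) + G_n^(k)(0) has exponential generating function
   2 Ei_k(log(1+t)) \sum_(i < x) (-1)^i e^(it).  Its n-th coefficient is a binomial
   convolution of the coefficients of e^(it) with those of Ei_k(log(1+t)), and
   m! [t^m] Ei_k(log(1+t)) = \sum_j S_1(m, j) / j^(k-1).  Series identities are
   checked on truncations to polynomials of degree at most n. *)

(* Otherwise [finv] resolves to [fingraph.finv]. *)
Local Notation finv := Defs.finv.

Lemma natr_fact_neq0 (R : numDomainType) n : (n`!%:R : R) != 0.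
Proof. by rewrite pnatr_eq0 -lt0n fact_gt0. Qed.

Section SeriesInverse.
Variable f : fps.

Lemma size_finv_aux n : size (finv_aux f n) = n.+1.
Proof. by elim: n => [|n IH] //=; rewrite size_rcons IH. Qed.

Lemma nth_finv_aux n j : (j <= n)%N -> nth 0 (finv_aux f n) j = finv f j.
Proof.
move=> le_jn; rewrite /Defs.finv -(subnKC le_jn).
elim: (n - j)%N => [|m IH]; first by rewrite addn0.
by rewrite addnS /= nth_rcons size_finv_aux ltnS leq_addr.
Qed.

Lemma finvS n :
  finv f n.+1 = - (f 0%N)^-1 * \sum_(i < n.+1) f i.+1 * finv f (n - i)%N.
Proof.
rewrite {1}/Defs.finv /= nth_rcons size_finv_aux ltnn eqxx.
by congr (_ * _); apply: eq_bigr => i _; rewrite nth_finv_aux ?leq_subr.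
Qed.

Lemma fmul_finv n : f 0%N != 0 -> fmul f (finv f) n = fone n.
Proof.
move=> f0_neq0; case: n => [|n]; first by rewrite /fmul big_ord1 /Defs.finv /= divff.
rewrite /fmul big_ord_recl subn0 finvS mulrA mulrN mulrV // mulN1r.
by rewrite (eq_bigr (fun i : 'I_n.+1 => f i.+1 * finv f (n - i)%N)) ?addNr.
Qed.

End SeriesInverse.

Lemma fmul_fexp a b n : fmul (fexp a) (fexp b) n = fexp (a + b) n.
Proof.
rewrite /fmul /fexp addrC exprDn mulr_suml; apply: eq_bigr => [[j /=]].
rewrite ltnS => le_jn _.
have binE : ('C(n, j)%:R : rat) = n`!%:R / (j`!%:R * (n - j)`!%:R).
  by rewrite -(bin_fact le_jn) !natrM mulfK // mulf_neq0 ?natr_fact_neq0.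
by rewrite -[_ *+ 'C(n, j)]mulr_natr binE; field; rewrite !natr_fact_neq0.
Qed.

Lemma mulD1_sum_exprN (R : pzRingType) (e : R) x :
  (e + 1) * \sum_(i < x) (- e) ^+ i = 1 - (- e) ^+ x.
Proof.
rewrite (_ : e + 1 = - (- e - 1)); last by rewrite opprB opprK addrC.
by rewrite mulNr -subrX1 opprB.
Qed.

Section TakePolyMul.
Variable R : nzSemiRingType.
Implicit Types p q : {poly R}.

Lemma coefM_take_polyl m p q i :
  (i < m)%N -> (take_poly m p * q)`_i = (p * q)`_i.
Proof.
move=> lt_im; rewrite !coefM; apply: eq_bigr => [[j /=]]; rewrite ltnS => le_ji _.
by rewrite coef_take_poly (leq_ltn_trans le_ji lt_im).
Qed.

Lemma coefM_take_polyr m p q i :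
  (i < m)%N -> (p * take_poly m q)`_i = (p * q)`_i.
Proof.
move=> lt_im; rewrite !coefM; apply: eq_bigr => j _.
by rewrite coef_take_poly (leq_ltn_trans (leq_subr j i) lt_im).
Qed.

Lemma take_poly_mulr m p q : take_poly m (p * take_poly m q) = take_poly m (p * q).
Proof.
by apply/polyP => i; rewrite !coef_take_poly; case: ifP => // /coefM_take_polyr ->.
Qed.

End TakePolyMul.

Definition trunc_fps (N : nat) (f : fps) : {poly rat} := \poly_(i < N) f i.

Section Truncation.
Variable N : nat.
Implicit Types f g : fps.

Lemma coef_fmul f g i :
  (i < N)%N -> fmul f g i = (trunc_fps N f * trunc_fps N g)`_i.
Proof.
move=> lt_iN; rewrite coefM; apply: eq_bigr => [[j /=]]; rewrite ltnS => le_ji _.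
by rewrite !coef_poly (leq_ltn_trans le_ji lt_iN) (leq_ltn_trans (leq_subr j i)).
Qed.

Lemma trunc_fmul f g :
  trunc_fps N (fmul f g) = take_poly N (trunc_fps N f * trunc_fps N g).
Proof.
apply/polyP => i; rewrite coef_take_poly coef_poly.
by case: ifP => // /coef_fmul ->.
Qed.

Lemma trunc_fadd f g :
  trunc_fps N (fadd f g) = trunc_fps N f + trunc_fps N g.
Proof. by apply/polyP => i; rewrite coefD !coef_poly; case: ifP; rewrite ?addr0. Qed.

Lemma trunc_fscale c f : trunc_fps N (fscale c f) = c *: trunc_fps N f.
Proof. by apply/polyP => i; rewrite coefZ !coef_poly; case: ifP; rewrite ?mulr0. Qed.

Lemma trunc_fexp_nat m :
  trunc_fps N (fexp m%:R) = take_poly N (trunc_fps N (fexp 1) ^+ m).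
Proof.
elim: m => [|m IH].
  apply/polyP => i; rewrite coef_take_poly coef_poly coef1 /fexp mulr0n.
  by case: ifP => // _; case: i => [|i]; rewrite ?expr0 ?fact0 ?divr1 ?expr0n ?mul0r.
rewrite -natr1 addrC exprS -take_poly_mulr -IH -trunc_fmul.
by apply/polyP => i; rewrite !coef_poly fmul_fexp.
Qed.

End Truncation.

Lemma trunc_fone N : trunc_fps N.+1 fone = 1.
Proof.
apply/polyP => i; rewrite coef_poly coef1 /fone.
by case: eqP => [->|_]; rewrite ?ltn0Sn //; case: ifP.
Qed.

Lemma trunc_fmul_finv N f :
  f 0%N != 0 -> take_poly N.+1 (trunc_fps N.+1 f * trunc_fps N.+1 (finv f)) = 1.
Proof.
move=> f0_neq0; rewrite -trunc_fmul -(trunc_fone N).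
by apply/polyP => i; rewrite !coef_poly fmul_finv.
Qed.

Local Notation EiLog k := (fcomp (fEi k) flog1p).

Lemma fmul_fexp_binomial f y n :
  n`!%:R * fmul f (fexp y) n =
  \sum_(m < n.+1) 'C(n, m)%:R * (m`!%:R * f m) * y ^+ (n - m).
Proof.
rewrite /fmul mulr_sumr; apply: eq_bigr => [[m /=]]; rewrite ltnS => le_mn _.
have binE : ('C(n, m)%:R : rat) = n`!%:R / (m`!%:R * (n - m)`!%:R).
  by rewrite -(bin_fact le_mn) !natrM mulfK // mulf_neq0 ?natr_fact_neq0.
by rewrite binE /fexp; field; rewrite !natr_fact_neq0.
Qed.

Lemma fEiS k n : fEi k n.+1 = ((n.+1%:R : rat) ^ k)^-1 / n`!%:R.
Proof. by []. Qed.

Lemma fact_mul_EiLog k m :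
  m`!%:R * EiLog k m = \sum_(1 <= j < m.+1) stirling1 m j / (j%:R ^ (k - 1)).
Proof.
rewrite /fcomp big_ord_recl {1}/fEi eqxx mul0r add0r mulr_sumr big_add1 big_mkord.
apply: eq_bigr => j _; rewrite lift0 fEiS /stirling1 factS natrM.
have j1_neq0 : (j.+1%:R : rat) != 0 by rewrite pnatr_eq0.
have expk : (j.+1%:R : rat) ^ k = j.+1%:R ^ (k - 1) * j.+1%:R.
  by rewrite -{1}(subrK 1 k) expfzDr // expr1z.
by rewrite expk; field; rewrite expfz_neq0 // natr_fact_neq0 addrC natr1.
Qed.

Lemma polyGenocchiE k y n :
  polyGenocchi k y n = 2 * n`!%:R *
    (trunc_fps n.+1 (EiLog k) * trunc_fps n.+1 (finv fexp_plus1)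
       * trunc_fps n.+1 (fexp y))`_n.
Proof.
rewrite /polyGenocchi (coef_fmul (N := n.+1)) // trunc_fscale trunc_fmul.
by rewrite -scalerAl coefZ coefM_take_polyl // mulrCA mulrA.
Qed.

Lemma polyGenocchi_alternating_sum k x n : (0 < x)%N ->
  (-1) ^+ (x - 1) * polyGenocchi k x%:R n + polyGenocchi k 0 n =
  2 * \sum_(i < x) (-1) ^+ i * (n`!%:R * fmul (EiLog k) (fexp i%:R) n).
Proof.
case: x => // x _; rewrite subSS subn0 !polyGenocchiE.
set a := trunc_fps n.+1 (EiLog k); set b := trunc_fps n.+1 (finv fexp_plus1).
set e := trunc_fps n.+1 (fexp 1).
have coef_fexp m p : (p * trunc_fps n.+1 (fexp m%:R))`_n = (p * e ^+ m)`_n.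
  by rewrite trunc_fexp_nat coefM_take_polyr.
have trunc_mul_b : take_poly n.+1 ((e + 1) * b) = 1.
  by rewrite -{1}(trunc_fone n) -trunc_fadd trunc_fmul_finv.
have coefM_inv_b p : (p * ((e + 1) * b))`_n = p`_n.
  by rewrite -(coefM_take_polyr (m := n.+1)) // trunc_mul_b mulr1.
have alt_sumE : \sum_(i < x.+1) (-1) ^+ i * (n`!%:R * fmul (EiLog k) (fexp i%:R) n)
    = n`!%:R * (a * b * (1 - (- e) ^+ x.+1))`_n.
  rewrite -mulD1_sum_exprN.
  rewrite (_ : a * b * _ = a * (\sum_(i < x.+1) (- e) ^+ i) * ((e + 1) * b)); last by ring.
  rewrite coefM_inv_b mulr_sumr coef_sum mulr_sumr; apply: eq_bigr => i _.
  rewrite (coef_fmul (N := n.+1)) // coef_fexp.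
  by rewrite -scaleN1r exprZn -scalerAr coefZ mulrCA.
have := coef_fexp 0%N (a * b); rewrite mulr0n expr0 mulr1 => ->.
rewrite coef_fexp alt_sumE -[- e]scaleN1r exprZn mulrBr mulr1 -scalerAr.
by rewrite coefB coefZ (exprS (-1 : rat)); ring.
Qed.

Lemma alternating_sum_fmul_EiLog_fexp k x n :
  \sum_(i < x) (-1) ^+ i * (n`!%:R * fmul (EiLog k) (fexp i%:R) n) =
  \sum_(1 <= m < n.+1) \sum_(1 <= j < m.+1) \sum_(0 <= i < x)
    (-1) ^+ i * (i%:R : rat) ^+ (n - m) * ('C(n, m))%:R
      * stirling1 m j / ((j%:R : rat) ^ (k - 1)).
Proof.
under eq_bigr => i _ do rewrite fmul_fexp_binomial big_ord_recl fact_mul_EiLog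
  big_geq // mulr0 mul0r add0r mulr_sumr.
rewrite big_add1 succnK big_mkord exchange_big; apply: eq_bigr => m _.
under eq_bigr => i _ do rewrite lift0 fact_mul_EiLog mulr_sumr mulr_suml mulr_sumr.
rewrite exchange_big; apply: eq_bigr => j _; rewrite big_mkord.
by apply: eq_bigr => i _; ring.
Qed.

Theorem corollary5 (k : int) (x n : nat) (hx : (0 < x)%N) (hn : (0 < n)%N) :
  (-1) ^+ (x - 1) * polyEuler k x%:R (n - 1) + polyEuler k 0 (n - 1) =
  2 / n%:R *
    \sum_(1 <= m < n.+1) \sum_(1 <= j < m.+1) \sum_(0 <= i < x)
      (-1) ^+ i * (i%:R : rat) ^+ (n - m) * ('C(n, m))%:R
        * stirling1 m j / ((j%:R : rat) ^ (k - 1)).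
Proof.
case: n hn => // n _; rewrite subSS subn0 /polyEuler mulrA -mulrDl.
by rewrite polyGenocchi_alternating_sum // alternating_sum_fmul_EiLog_fexp mulrAC.
Qed.
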